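(* Let $q$ be a prime power, $n\ge k\ge d\ge0$ integers, and $V_1,\dots,V_\ell$ subspaces of $\mathbb{F}_q^n$, each of dimension at most $k$. The following are equivalent: (1) there is a generic kernel pattern $(T_1,\dots,T_k)$ consisting solely of copies of $V_1,\dots,V_\ell$ and an additional $d$ copies of $\{0\}$; (2) there exist integers $\delta_1,\dots,\delta_\ell\ge0$ with $\sum_{i=1}^\ell\delta_i=k-d$ such that $\dim\big(\bigcap_{i\in\Omega}V_i\big)\le k-\sum_{i\in\Omega}\delta_i$ for every nonempty $\Omega\subseteq[\ell]$; (3) for every partition $P_1\sqcup\cdots\sqcup P_s=[\ell]$ into nonempty parts, $\sum_{i=1}^s\dim\big(\bigcap_{j\in P_i}V_j\big)\le(s-1)k+d$.
   Context: A generic kernel pattern is a $k$-tuple $(T_1,\dots,T_k)$ of subspaces of $\mathbb{F}_q^n$ with $\dim(\bigcap_{i\in\Omega}T_i)\le k-|\Omega|$ for all nonempty $\Omega\subseteq[k]$. *)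

From HB Require Import structures.
From mathcomp Require Import all_boot all_order all_algebra all_field.
Set Implicit Arguments. Unset Strict Implicit. Unset Printing Implicit Defensive.
Import GRing.Theory.
Local Open Scope ring_scope.

Definition generic_kernel_pattern (F : fieldType) (n k : nat)
    (T : 'I_k -> {vspace 'rV[F]_n}) : Prop :=
  forall Om : {set 'I_k}, Om != set0 ->
    (\dim (\bigcap_(i in Om) T i)%VS <= k - #|Om|)%N.

Definition pattern_of (F : fieldType) (n k l : nat)
    (V : 'I_l -> {vspace 'rV[F]_n}) (sigma : 'I_k -> option 'I_l)
    : 'I_k -> {vspace 'rV[F]_n} :=
  fun j => match sigma j with Some i => V i | None => 0%VS end.

From HB Require Import structures.
From mathcomp Require Import all_boot all_order all_algebra all_field.
From mathcomp Require Import zify.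
Set Implicit Arguments. Unset Strict Implicit. Unset Printing Implicit Defensive.

(* Write g(A) for the dimension of the intersection of the V_i over i in A.
   A pattern is determined, up to order, by the number delta_i of copies of
   each V_i in it, and it is generic iff g(A) + sum_(i in A) delta_i <= k for
   every nonempty A: the positions carrying some V_i with i in A are
   sum_(i in A) delta_i many, and their intersection is the one over A.  This
   gives (1) <-> (2), and summing over the blocks of a partition gives
   (2) -> (3).  Conversely, g is supermodular, since X :&: Y and X + Y lie in
   the intersections over A :|: B and A :&: B; hence the sets where equality
   holds ("tight" sets) are closed under unions of intersecting pairs.  Raise
   delta greedily from 0: if no delta_i can be raised, every index lies in a
   tight set, the maximal tight sets partition the indices, and summing over
   that partition contradicts (3) as long as sum delta < k - d. *)

Lemma big_setT (R : Type) (idx : R) (op : R -> R -> R) (I : finType) (F : I -> R) :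
  \big[op/idx]_(i in [set: I]) F i = \big[op/idx]_i F i.
Proof. by apply: eq_bigl => i; rewrite inE. Qed.

Lemma leq_sum_subset (I : finType) (A B : {set I}) (f : I -> nat) :
  A \subset B -> \sum_(i in A) f i <= \sum_(i in B) f i.
Proof.
by move=> /setIidPr sAB; rewrite (big_setID (A := B) A) /= sAB leq_addr.
Qed.

Lemma sum_setUI (I : finType) (A B : {set I}) (f : I -> nat) :
  \sum_(i in A :|: B) f i + \sum_(i in A :&: B) f i =
  \sum_(i in A) f i + \sum_(i in B) f i.
Proof.
rewrite (big_setID (A := A :|: B) A) (big_setID (A := B) A) /=.
rewrite setUK setDUl setDv set0U (setIC B A); lia.
Qed.

Lemma sum_option (X : finType) (f : option X -> nat) :
  \sum_x f x = f None + \sum_x f (Some x).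
Proof.
rewrite (bigD1 None) //= (reindex_omap Some id) //=; last by case.
by congr (_ + _); apply: eq_bigl => x; rewrite eqxx.
Qed.

Lemma sum_card_fibres (J X : finType) (f : J -> X) (S : {set X}) :
  \sum_(x in S) #|[set j | f j == x]| = #|f @^-1: S|.
Proof.
rewrite -sum1_card (partition_big f (mem S)); last by move=> j; rewrite inE.
apply: eq_bigr => x xS; rewrite -sum1_card; apply: eq_bigl => j.
by rewrite !inE; case: eqP => [->|]; rewrite ?xS ?andbF.
Qed.

Lemma card_tnth_fibre (X : finType) k (t : k.-tuple X) x :
  #|[set j | tnth t j == x]| = count_mem x t.
Proof.
rewrite -sum1_card -sum1_count -[in RHS](map_tnth_enum t) big_map.
by rewrite big_enum_cond /=; apply: eq_bigl => j; rewrite inE.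
Qed.

Lemma sum_indicator (I : finType) (A : {set I}) i :
  \sum_(x in A) (x == i : nat) = (i \in A).
Proof.
rewrite big_mkcond (bigD1 i) //= eqxx big1 ?addn0 => [|x /negbTE xi].
  by case: (i \in A).
by rewrite xi; case: (x \in A).
Qed.

Lemma exists_fun_with_fibre_cards (X : finType) (m : X -> nat) k :
  \sum_x m x = k ->
  exists f : 'I_k -> X, forall x, #|[set j | f j == x]| = m x.
Proof.
move=> sum_m; pose s := flatten [seq nseq (m y) y | y <- enum X].
have size_s : size s == k.
  rewrite size_flatten /shape -map_comp sumnE big_map big_enum /= -sum_m.
  by apply/eqP/eq_bigr => y _; rewrite size_nseq.
exists (tnth (Tuple size_s)) => x; rewrite card_tnth_fibre /=.
rewrite count_flatten -map_comp sumnE big_map big_enum /= (bigD1 x) //=.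
rewrite count_nseq /= eqxx mul1n big1 ?addn0 // => y neq.
by rewrite /= count_nseq /=; case: eqP neq => // ->.
Qed.

Section Augmentation.
Variables (I : finType) (g : {set I} -> nat) (k : nat).

Definition admissible (delta : I -> nat) :=
  [forall A : {set I}, (A != set0) ==> (g A + \sum_(x in A) delta x <= k)].

Lemma admissibleP delta :
  reflect (forall A, A != set0 -> g A + \sum_(x in A) delta x <= k)
          (admissible delta).
Proof.
apply: (iffP forallP) => [adm A nA | adm A]; first by have := adm A; rewrite nA.
by apply/implyP => /adm.
Qed.

Lemma admissible_subE delta : \sum_x delta x <= k ->
  admissible delta <->
  (forall A, A != set0 -> g A <= k - \sum_(x in A) delta x).
Proof.
move=> sum_le; have sumA_le (A : {set I}) : \sum_(x in A) delta x <= k.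
  by apply: leq_trans sum_le; rewrite -big_setT leq_sum_subset ?subsetT.
split=> [/admissibleP adm A nA | adm]; first by rewrite leq_subRL // addnC adm.
by apply/admissibleP => A nA; rewrite addnC -leq_subRL // adm.
Qed.

Lemma admissible_partition_bound d delta :
  admissible delta -> \sum_x delta x = k - d ->
  forall P, partition P [set: I] -> \sum_(B in P) g B + k <= #|P| * k + d.
Proof.
move=> /admissibleP adm sum_delta P /and3P[/eqP coverP trivP set0P].
have : \sum_(B in P) (g B + \sum_(x in B) delta x) <= \sum_(B in P) k.
  by apply: leq_sum => B BP; apply: adm; apply: contraNneq set0P => <-.
rewrite sum_nat_const big_split /= -(big_trivIset _ trivP) coverP big_setT.
rewrite sum_delta; lia.
Qed.

Hypothesis g_supermod : forall A B, A :&: B != set0 ->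
  g A + g B <= g (A :|: B) + g (A :&: B).

Section TightSets.
Variable delta : I -> nat.
Hypothesis delta_adm : admissible delta.

Definition tight A := (A != set0) && (g A + \sum_(x in A) delta x == k).

Lemma tightU A B : tight A -> tight B -> A :&: B != set0 -> tight (A :|: B).
Proof.
move=> /andP[nA /eqP tA] /andP[nB /eqP tB] nAB.
have nAuB : A :|: B != set0 by rewrite setU_eq0 negb_and nA.
rewrite /tight nAuB; apply/eqP.
have := g_supermod nAB; have := sum_setUI A B delta.
have := (admissibleP _ delta_adm) _ nAuB; have := (admissibleP _ delta_adm) _ nAB.
lia.
Qed.

Definition max_tight i := \bigcup_(A | tight A && (i \in A)) A.

Lemma sub_max_tight i A : tight A -> i \in A -> A \subset max_tight i.
Proof. by move=> tA iA; apply: bigcup_sup; rewrite tA iA. Qed.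

Lemma max_tight_tight i A : tight A -> i \in A ->
  tight (max_tight i) /\ i \in max_tight i.
Proof.
move=> tA iA; have iM : i \in max_tight i by apply: subsetP (sub_max_tight tA iA) _ _.
suff [/eqP M0 | //] : max_tight i == set0 \/ tight (max_tight i) /\ i \in max_tight i.
  by rewrite M0 inE in iM.
rewrite /max_tight; apply: (big_ind (fun X => X == set0 \/ tight X /\ i \in X)).
- by left.
- move=> X Y [/eqP -> | [tX iX]] [/eqP -> | [tY iY]];
    rewrite ?set0U ?setU0; [by left | by right | by right | right].
  split; last by rewrite inE iX.
  by apply: tightU => //; apply/set0Pn; exists i; rewrite inE iX iY.
- by move=> A' /andP[tA' iA']; right.
Qed.

Lemma max_tight_partition : (forall i, exists2 A, tight A & i \in A) ->
  partition [set max_tight i | i in [set: I]] [set: I].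
Proof.
move=> covered.
have maxP i : tight (max_tight i) /\ i \in max_tight i.
  by have [A tA iA] := covered i; apply: max_tight_tight tA iA.
apply/and3P; split.
- apply/eqP/setP => x; rewrite inE; apply/bigcupP; exists (max_tight x).
    by apply/imsetP; exists x.
  by case: (maxP x).
- apply/trivIsetP => _ _ /imsetP[i _ ->] /imsetP[j _ ->] neq.
  rewrite -setI_eq0; apply: contraR neq => meet.
  have [[ti ii] [tj ij]] := (maxP i, maxP j).
  have tU := tightU ti tj meet.
  have sub_i : max_tight i :|: max_tight j \subset max_tight i.
    by apply: sub_max_tight tU _; rewrite inE ii.
  have sub_j : max_tight i :|: max_tight j \subset max_tight j.
    by apply: sub_max_tight tU _; rewrite inE ij orbT.
  rewrite eqEsubset (subset_trans (subsetUl _ _) sub_j).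
  by rewrite (subset_trans (subsetUr _ _) sub_i).
- by apply/imsetP => -[i _ M0]; case: (maxP i); rewrite -M0 inE.
Qed.

Lemma tight_partition_sum P : partition P [set: I] -> {subset P <= tight} ->
  \sum_(B in P) g B + \sum_x delta x = #|P| * k.
Proof.
move=> /and3P[/eqP coverP trivP _] tP.
rewrite -big_setT -coverP (big_trivIset _ trivP) -big_split -sum_nat_const /=.
by apply: eq_bigr => B /tP /andP[_ /eqP].
Qed.

End TightSets.

Lemma tight_of_not_admissible_incr delta i : admissible delta ->
  ~~ admissible (fun x => delta x + (x == i)) -> exists2 A, tight delta A & i \in A.
Proof.
move=> /admissibleP adm; rewrite /admissible negb_forall => /existsP[A].
rewrite negb_imply big_split /= sum_indicator => /andP[nA over].
have := adm A nA; case: (boolP (i \in A)) over => iA over le_k; last by lia.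
by exists A => //; rewrite /tight nA; lia.
Qed.

Variable d : nat.
Hypothesis g_partition : forall P, partition P [set: I] ->
  \sum_(B in P) g B + k <= #|P| * k + d.

Lemma admissible_incr delta : admissible delta -> \sum_x delta x < k - d ->
  exists2 delta', admissible delta' & \sum_x delta' x = (\sum_x delta x).+1.
Proof.
move=> adm lt_sum.
case: (pickP (fun i => admissible (fun x => delta x + (x == i)))) => [i adm_i | stuck].
  exists (fun x => delta x + (x == i)) => //.
  by rewrite big_split /= -[X in _ + X]big_setT sum_indicator in_setT addn1.
have covered i : exists2 A, tight delta A & i \in A.
  by apply: tight_of_not_admissible_incr; rewrite ?stuck.
have partP := max_tight_partition adm covered.
have tightP : {subset [set max_tight delta i | i in [set: I]] <= tight delta}.
  move=> _ /imsetP[i _ ->]; have [A tA iA] := covered i.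
  by case: (max_tight_tight adm tA iA).
have := tight_partition_sum partP tightP; have := g_partition partP; lia.
Qed.

Hypothesis g_le : forall A, A != set0 -> g A <= k.

Lemma exists_admissible : exists2 delta, admissible delta & \sum_x delta x = k - d.
Proof.
suff : forall t, t <= k - d -> exists2 delta, admissible delta & \sum_x delta x = t.
  exact.
elim=> [_ | t IH lt_t].
  exists (fun _ => 0); last by rewrite big1.
  by apply/admissibleP => A nA; rewrite big1 // addn0 g_le.
have [delta adm sum_t] := IH (ltnW lt_t).
by rewrite -sum_t in lt_t *; apply: admissible_incr.
Qed.

End Augmentation.

Section IntersectionDimension.
Variables (F : fieldType) (vT : vectType F) (I : finType) (V : I -> {vspace vT}).

Definition capdim (A : {set I}) := \dim (\bigcap_(i in A) V i)%VS.

Lemma capdim_supermod A B :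
  capdim A + capdim B <= capdim (A :|: B) + capdim (A :&: B).
Proof.
set X := (\bigcap_(i in A) V i)%VS; set Y := (\bigcap_(i in B) V i)%VS.
have capXY : (X :&: Y <= \bigcap_(i in (A :|: B)%SET) V i)%VS.
  apply/subv_bigcapP => i; rewrite inE => /orP[iA | iB].
  - exact: subv_trans (capvSl X Y) (bigcapv_inf i iA (subvv _)).
  - exact: subv_trans (capvSr X Y) (bigcapv_inf i iB (subvv _)).
have addXY : (X + Y <= \bigcap_(i in (A :&: B)%SET) V i)%VS.
  apply/subv_bigcapP => i; rewrite inE => /andP[iA iB].
  by rewrite subv_add (bigcapv_inf i iA (subvv _)) (bigcapv_inf i iB (subvv _)).
have := dimv_sum_cap X Y; have := dimvS capXY; have := dimvS addXY.
rewrite /capdim -/X -/Y; lia.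
Qed.

Lemma capdim_le (A : {set I}) i : i \in A -> capdim A <= \dim (V i).
Proof. by move=> iA; apply/dimvS/(bigcapv_inf i iA (subvv _)). Qed.

Lemma capdim_le_bound k (A : {set I}) :
  (forall i, \dim (V i) <= k) -> A != set0 -> capdim A <= k.
Proof. by move=> dimV /set0Pn[i iA]; apply: leq_trans (capdim_le iA) (dimV i). Qed.

End IntersectionDimension.

Section KernelPatterns.
Variables (F : fieldType) (n k l : nat) (V : 'I_l -> {vspace 'rV[F]_n}).

Section Labelling.
Variable sigma : 'I_k -> option 'I_l.

Local Notation T := (pattern_of V sigma).
Local Notation mult i := #|[set j | sigma j == Some i]|.

Lemma sum_mult_preim (S : {set 'I_l}) :
  \sum_(i in S) mult i = #|sigma @^-1: (Some @: S)|.
Proof.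
rewrite -sum_card_fibres (big_imset (fun x => #|[set j | sigma j == x]|)) //.
exact: in2W Some_inj.
Qed.

Lemma sum_mult : \sum_i mult i = k - #|[set j | sigma j == None]|.
Proof.
rewrite -big_setT sum_mult_preim.
rewrite -[X in (_ = X - _)](card_ord k) -[[set j | _ == None]]setCK -cardsCs.
apply: eq_card => j; rewrite !inE; case: (sigma j) => [i|]; first by rewrite imset_f.
by apply/imsetP => -[].
Qed.

Lemma generic_pattern_admissible : (forall i, \dim (V i) <= k) ->
  generic_kernel_pattern T -> admissible (capdim V) k (fun i => mult i).
Proof.
move=> dimV generic; apply/admissibleP => S nS.
set Om := sigma @^-1: (Some @: S).
rewrite sum_mult_preim -/Om.
have [/eqP Om0 | nOm] := boolP (Om == set0).
  by rewrite Om0 cards0 addn0 capdim_le_bound.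
have capS : (\bigcap_(i in S) V i <= \bigcap_(j in Om) T j)%VS.
  apply/subv_bigcapP => j; rewrite inE => /imsetP[i iS sigma_j].
  by rewrite /pattern_of sigma_j; apply: bigcapv_inf iS (subvv _).
rewrite addnC -leq_subRL ?(leq_trans (dimvS capS) (generic Om nOm)) //.
by rewrite -[X in _ <= X](card_ord k) max_card.
Qed.

Lemma admissible_generic_pattern delta : admissible (capdim V) k delta ->
  (forall i, mult i = delta i) -> generic_kernel_pattern T.
Proof.
move=> /admissibleP adm mult_delta Om nOm.
case: (pickP [pred j in Om | sigma j == None]) => [j /andP[jOm /eqP sigma_j] | noNone].
  have cap0 : (\bigcap_(j in Om) T j <= 0)%VS.
    by apply: bigcapv_inf jOm _; rewrite /pattern_of sigma_j.
  by rewrite (leq_trans (dimvS cap0)) // dimv0.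
set S := [set i | Some i \in sigma @: Om].
have capOm : (\bigcap_(j in Om) T j <= \bigcap_(i in S) V i)%VS.
  apply/subv_bigcapP => i; rewrite inE => /imsetP[j jOm sigma_j].
  by apply: bigcapv_inf jOm _; rewrite /pattern_of -sigma_j.
have OmS : Om \subset sigma @^-1: (Some @: S).
  apply/subsetP => j jOm; move: (noNone j); rewrite /= jOm inE.
  case sigma_j : (sigma j) => [i|] // _; apply: imset_f.
  by rewrite inE -sigma_j imset_f.
have nS : S != set0.
  have [j jOm] := set0Pn _ nOm; have := subsetP OmS j jOm.
  by rewrite inE => /imsetP[i iS _]; apply/set0Pn; exists i.
have := adm S nS; have := subset_leq_card OmS; have := dimvS capOm.
rewrite -sum_mult_preim (eq_bigr _ (fun i _ => mult_delta i)) => le_dim le_Om adm_S.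
apply: leq_trans le_dim (leq_trans _ (leq_sub2l k le_Om)).
have sum_le : \sum_(i in S) delta i <= k := leq_trans (leq_addl _ _) adm_S.
by rewrite leq_subRL // addnC.
Qed.

End Labelling.

Lemma exists_generic_pattern d delta : d + \sum_i delta i = k ->
  admissible (capdim V) k delta ->
  exists sigma : 'I_k -> option 'I_l,
    #|[set j | sigma j == None]| = d /\ generic_kernel_pattern (pattern_of V sigma).
Proof.
move=> sum_delta adm.
have [sigma fibres] : exists sigma : 'I_k -> option 'I_l,
    forall x, #|[set j | sigma j == x]| = oapp delta d x.
  by apply: exists_fun_with_fibre_cards; rewrite sum_option.
exists sigma; split; first exact: fibres None.
exact: admissible_generic_pattern adm (fun i => fibres (Some i)).
Qed.

End KernelPatterns.

Theorem mainTheorem16 (F : finFieldType) (n k d l : nat)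
  (V : 'I_l -> {vspace 'rV[F]_n}) :
  (d <= k)%N -> (k <= n)%N ->
  (forall i, (\dim (V i) <= k)%N) ->
  [/\ (exists sigma : 'I_k -> option 'I_l,
         #|[set j | sigma j == None]| = d /\
         generic_kernel_pattern (pattern_of V sigma))
    <-> (exists delta : 'I_l -> nat,
         (\sum_i delta i)%N = (k - d)%N /\
         forall Om : {set 'I_l}, Om != set0 ->
           (\dim (\bigcap_(i in Om) V i)%VS <= k - \sum_(i in Om) delta i)%N),
      (exists delta : 'I_l -> nat,
         (\sum_i delta i)%N = (k - d)%N /\
         forall Om : {set 'I_l}, Om != set0 ->
           (\dim (\bigcap_(i in Om) V i)%VS <= k - \sum_(i in Om) delta i)%N)
    <-> (forall P : {set {set 'I_l}}, partition P [set: 'I_l] ->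
         (\sum_(B in P) \dim (\bigcap_(j in B) V j)%VS + k
            <= #|P| * k + d)%N)
    & (forall P : {set {set 'I_l}}, partition P [set: 'I_l] ->
         (\sum_(B in P) \dim (\bigcap_(j in B) V j)%VS + k
            <= #|P| * k + d)%N)
    <-> (exists sigma : 'I_k -> option 'I_l,
         #|[set j | sigma j == None]| = d /\
         generic_kernel_pattern (pattern_of V sigma)) ].
Proof.
move=> le_dk _ dimV.
have admE delta : \sum_i delta i = k - d ->
    admissible (capdim V) k delta <->
    (forall Om, Om != set0 -> capdim V Om <= k - \sum_(i in Om) delta i).
  by move=> sum_delta; apply: admissible_subE; rewrite sum_delta leq_subr.
set S1 := exists sigma : 'I_k -> option 'I_l, _.
set S2 := exists delta : 'I_l -> nat, _.
set S3 := forall P : {set {set 'I_l}}, _.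
have S1_S2 : S1 -> S2.
  case=> sigma [card_none generic].
  have sum_mult_k : \sum_i #|[set j | sigma j == Some i]| = k - d.
    by rewrite sum_mult card_none.
  exists (fun i => #|[set j | sigma j == Some i]|); split=> //.
  by apply/(admE _ sum_mult_k); apply: generic_pattern_admissible.
have S2_S1 : S2 -> S1.
  case=> delta [sum_delta /(admE _ sum_delta) adm].
  by apply: exists_generic_pattern adm; rewrite sum_delta subnKC.
have S2_S3 : S2 -> S3.
  case=> delta [sum_delta /(admE _ sum_delta) adm].
  exact: admissible_partition_bound adm sum_delta.
have S3_S2 : S3 -> S2.
  move=> /(exists_admissible (fun A B _ => capdim_supermod V A B)).
  case=> [A|delta adm sum_delta]; first exact: capdim_le_bound.
  by exists delta; split => //; apply/(admE _ sum_delta).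
split; split; [exact: S1_S2 | exact: S2_S1 | exact: S2_S3 | exact: S3_S2 |
  by move/S3_S2/S2_S1 | by move/S1_S2/S2_S3].
Qed.
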